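(* Let $L(\mathbf x,\dot{\mathbf x},t)=-mc^2\sqrt{1-\dot{\mathbf x}^2/c^2}-q\big[A^0(t,\mathbf x)-\mathbf A(t,\mathbf x)\cdot\dot{\mathbf x}/c\big]$ and let $\mathbf Q(\mathbf x,\dot{\mathbf x},t)$ be an additional force. Define $$\hat{\mathcal L}(\hat{\mathbf x},\hat{\mathbf x}',\xi):=(1+\hat z')\,L\Big(\hat{\mathbf x},\frac{c\hat{\mathbf x}'}{1+\hat z'},\frac{\xi+\hat z}{c}\Big),$$ $$\hat{\mathbf Q}^{\perp}(\hat{\mathbf x},\hat{\mathbf x}',\xi):=(1+\hat z')\,\mathbf Q^{\perp}\Big(\hat{\mathbf x},\frac{c\hat{\mathbf x}'}{1+\hat z'},\frac{\xi+\hat z}{c}\Big),\qquad \hat Q^z(\hat{\mathbf x},\hat{\mathbf x}',\xi):=\Big[Q^z-\hat{\mathbf x}^{\perp}{}'\cdot\mathbf Q^{\perp}\Big]\Big(\hat{\mathbf x},\frac{c\hat{\mathbf x}'}{1+\hat z'},\frac{\xi+\hat z}{c}\Big).$$ Then a motion $\mathbf x(t)$ with $|\dot{\mathbf x}|<c$ satisfies the Lagrange equations $$\frac{d}{dt}\frac{\partial L}{\partial\dot{\mathbf x}}-\frac{\partial L}{\partial\mathbf x}=\mathbf Q$$ if and only if its reparametrization $\hat{\mathbf x}(\xi)$ by $\xi=ct-z$ satisfies $$\frac{d}{d\xi}\frac{\partial\hat{\mathcal L}}{\partial\hat{\mathbf x}'}-\frac{\partial\hat{\mathcal L}}{\partial\hat{\mathbf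 x}}=\hat{\mathbf Q}.$$
   Context: A particle of rest mass $m>0$ and charge $q$ in an external electromagnetic potential $(A^0,\mathbf A)(t,\mathbf x)$. Coordinates $\mathbf x=(x,y,z)$, $\perp$ denotes $(x,y)$-components, dot is $d/dt$. Since $|\dot{\mathbf x}|<c$, $\xi(t)=ct-z(t)$ is strictly increasing; $\hat{\mathbf x}(\xi)$ is defined by $\hat{\mathbf x}(\xi(t))=\mathbf x(t)$, and prime denotes $d/d\xi$ (so that $1+\hat z'>0$ and $d/d\xi=(1+\hat z')\,d/d(ct)$). *)

From Stdlib Require Import Reals.
From Coquelicot Require Import Coquelicot.
Open Scope R_scope.

Inductive axis := ax | ay | az.
Definition V3 : Type := (R * R * R)%type.
Definition mk3 (a b d : R) : V3 := (a, b, d).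
Definition vc (v : V3) (i : axis) : R :=
  match i with ax => fst (fst v) | ay => snd (fst v) | az => snd v end.
Definition upd (v : V3) (i : axis) (s : R) : V3 :=
  match i with
  | ax => mk3 s (vc v ay) (vc v az)
  | ay => mk3 (vc v ax) s (vc v az)
  | az => mk3 (vc v ax) (vc v ay) s
  end.
Definition dot (v w : V3) : R :=
  vc v ax * vc w ax + vc v ay * vc w ay + vc v az * vc w az.
Definition scal (k : R) (v : V3) : V3 :=
  mk3 (k * vc v ax) (k * vc v ay) (k * vc v az).

Definition vel (p : R -> V3) (t : R) : V3 :=
  mk3 (Derive (fun s => vc (p s) ax) t)
      (Derive (fun s => vc (p s) ay) t)
      (Derive (fun s => vc (p s) az) t).

(* Lagrangians L(X, V, t) and generalized forces Q(X, V, t). *)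
Definition Lag : Type := V3 -> V3 -> R -> R.
Definition Force : Type := V3 -> V3 -> R -> V3.

Definition pdV (L : Lag) (X V : V3) (t : R) (i : axis) : R :=
  Derive (fun s => L X (upd V i s) t) (vc V i).
Definition pdX (L : Lag) (X V : V3) (t : R) (i : axis) : R :=
  Derive (fun s => L (upd X i s) V t) (vc X i).

Definition EL (L : Lag) (Q : Force) (p : R -> V3) (t : R) : Prop :=
  forall i : axis,
    Derive (fun s => pdV L (p s) (vel p s) s i) t - pdX L (p t) (vel p t) t i
    = vc (Q (p t) (vel p t) t) i.

Definition Lrel (m c q : R) (A0 : R -> V3 -> R) (A : R -> V3 -> V3) : Lag :=
  fun X V t => - m * c ^ 2 * sqrt (1 - dot V V / c ^ 2)
               - q * (A0 t X - dot (A t X) V / c).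

Definition Lhat (c : R) (L : Lag) : Lag :=
  fun Xh Vh xi =>
    (1 + vc Vh az) * L Xh (scal (c / (1 + vc Vh az)) Vh) ((xi + vc Xh az) / c).

Definition Qhat (c : R) (Q : Force) : Force :=
  fun Xh Vh xi =>
    let F := Q Xh (scal (c / (1 + vc Vh az)) Vh) ((xi + vc Xh az) / c) in
    mk3 ((1 + vc Vh az) * vc F ax)
        ((1 + vc Vh az) * vc F ay)
        (vc F az - (vc Vh ax * vc F ax + vc Vh ay * vc F ay)).

Definition pd_t (f : R -> V3 -> R) (t : R) (X : V3) : R :=
  Derive (fun s => f s X) t.
Definition pd_x (f : R -> V3 -> R) (t : R) (X : V3) (i : axis) : R :=
  Derive (fun s => f t (upd X i s)) (vc X i).
Definition IsC1 (f : R -> V3 -> R) : Prop :=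
  forall (t : R) (X : V3),
    ex_derive (fun s => f s X) t /\
    (forall i, ex_derive (fun s => f t (upd X i s)) (vc X i)) /\
    continuous (fun p : R * V3 => pd_t f (fst p) (snd p)) (t, X) /\
    (forall i, continuous (fun p : R * V3 => pd_x f (fst p) (snd p) i) (t, X)).

Definition in_I (a b : Rbar) (t : R) : Prop := Rbar_lt a t /\ Rbar_lt t b.

(* With xi = c t - z we have d/dxi = (c - v_z)^-1 d/dt and 1 + z' = c / (c - v_z).
   The hatted momenta are c p_perp and c p_z - E, where p is the canonical momentum and
   E = v.p - L the energy; moreover dLhat/dx_perp = (1 + z') dL/dx_perp and
   dLhat/dz = (1 + z') (dL/dz + (1/c) dL/dt).  With the energy theorem
   dE/dt = v.(dp/dt - dL/dx) - dL/dt, the residuals R = dp/dt - dL/dx - Q of the Lagrange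
   equations transform as
     Rhat_perp = c / (c - v_z) R_perp,   Rhat_z = R_z - v_perp / (c - v_z) . R_perp,
   an invertible unitriangular map, so one system holds iff the other does.  The analytic
   input is a chain rule for C^1 fields along differentiable curves and the rule for
   differentiating through the strictly increasing change of parameter t |-> xi. *)

From Pilot Require Import Defs.
From Stdlib Require Import Reals Lra Ranalysis5.
From Coquelicot Require Import Coquelicot.
Open Scope R_scope.

Lemma is_derive_Rplus (f g : R -> R) (x a b : R) :
  is_derive f x a -> is_derive g x b -> is_derive (fun y => f y + g y) x (a + b).
Proof. exact (is_derive_plus f g x a b). Qed.

Lemma is_derive_Rminus (f g : R -> R) (x a b : R) :
  is_derive f x a -> is_derive g x b -> is_derive (fun y => f y - g y) x (a - b).
Proof. exact (is_derive_minus f g x a b). Qed.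

Lemma is_derive_Rconst (k x : R) : is_derive (fun _ => k) x 0.
Proof. exact (is_derive_const k x). Qed.

Lemma is_derive_continuous (f : R -> R) (x l : R) : is_derive f x l -> continuous f x.
Proof. intros Hf. apply (@ex_derive_continuous R_AbsRing R_NormedModule). now exists l. Qed.

Lemma is_derive_remainder (f : R -> R) (x l : R) :
  is_derive f x l <->
  forall eps, 0 < eps ->
    locally x (fun y => Rabs (f y - f x - l * (y - x)) <= eps * Rabs (y - x)).
Proof.
  split.
  - intros [_ Hd] eps Heps.
    assert (H := Hd x (fun P HP => HP) (mkposreal eps Heps)).
    revert H; apply filter_imp; intros y Hy; simpl in Hy.
    unfold norm, minus, plus, opp, scal in Hy; simpl in Hy.
    unfold mult in Hy; simpl in Hy.
    replace (l * (y - x)) with ((y + - x) * l) by ring. exact Hy.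
  - intros Hr. split; [apply is_linear_scal_l|].
    intros x' Hx' eps.
    assert (E : x = x') by exact (@is_filter_lim_locally_unique R_AbsRing R_NormedModule x x' Hx').
    subst x'.
    assert (Hy0 := Hr eps (cond_pos eps)).
    revert Hy0; apply filter_imp; intros y Hy.
    unfold norm, minus, plus, opp, scal; simpl; unfold mult; simpl.
    replace ((y + - x) * l) with (l * (y - x)) by ring. exact Hy.
Qed.

Lemma is_derive_local_bound (f : R -> R) (x l : R) :
  is_derive f x l ->
  locally x (fun y => Rabs (f y - f x) <= (Rabs l + 1) * Rabs (y - x)).
Proof.
  intros Hf. apply (is_derive_remainder f x l) with (eps := 1) in Hf; [|lra].
  revert Hf; apply filter_imp; intros y Hy.
  replace (f y - f x) with ((f y - f x - l * (y - x)) + l * (y - x)) by ring.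
  eapply Rle_trans; [apply Rabs_triang|]. rewrite Rabs_mult. lra.
Qed.

Lemma is_derive_partial_increment (h dh : R -> R -> R) (al : R -> R) (s0 da : R) :
  (forall s r, is_derive (h s) r (dh s r)) ->
  continuous (fun p : R * R => dh (fst p) (snd p)) (s0, al s0) ->
  is_derive al s0 da ->
  is_derive (fun s => h s (al s) - h s (al s0)) s0 (dh s0 (al s0) * da).
Proof.
  intros Hh Hdh Hal.
  set (L := dh s0 (al s0)).
  set (rem := fun s => (h s (al s) - L * al s) - (h s (al s0) - L * al s0)).
  apply (is_derive_ext (fun s => L * (al s - al s0) + rem s)).
  { intros s; unfold rem. simpl. ring. }
  replace (L * da) with (L * (da - 0) + 0) by ring.
  apply (is_derive_Rplus (fun s => L * (al s - al s0)) rem).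
  { apply is_derive_scal, is_derive_Rminus; [exact Hal|apply is_derive_Rconst]. }
  apply is_derive_remainder. intros eps Heps.
  set (K := Rabs da + 1).
  assert (HK : 0 < K) by (unfold K; pose proof (Rabs_pos da); lra).
  destruct (Hdh _ (locally_ball L (mkposreal (eps / K) (Rdiv_lt_0_compat _ _ Heps HK))))
    as [d Hd].
  assert (Hcont := is_derive_continuous al s0 da Hal).
  assert (Hnear : locally s0 (fun s => ball (al s0) d (al s)))
    by exact (Hcont _ (locally_ball (al s0) d)).
  generalize (filter_and _ _ (is_derive_local_bound al s0 da Hal)
               (filter_and _ _ Hnear (locally_ball s0 d))).
  apply filter_imp; intros s [Hlip [Has Hs]].
  unfold rem; rewrite !Rminus_eq_0, Rminus_0_r, Rmult_0_l, Rminus_0_r.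
  (* Mean value inequality for r |-> h s r - L r, whose derivative dh s r - L is small. *)
  assert (Hbv : Rabs ((h s (al s) - L * al s) - (h s (al s0) - L * al s0))
                <= eps / K * Rabs (al s - al s0)).
  { apply (bounded_variation (fun r => h s r - L * r) (fun r => dh s r - L)).
    intros r Hr. split.
    - apply (is_derive_Rminus (h s) (fun r => L * r)); [apply Hh|].
      auto_derive; [exact I|ring].
    - assert (Hball : ball L (eps / K) (dh s r)).
      { apply (Hd (s, r)). split; [exact Hs|].
        change (Rabs (r - al s0) < d). change (Rabs (al s - al s0) < d) in Has. lra. }
      change (Rabs (dh s r - L) < eps / K) in Hball. lra. }
  eapply Rle_trans; [exact Hbv|].
  replace (eps * Rabs (s - s0)) with (eps / K * (K * Rabs (s - s0))) by (field; lra).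
  apply Rmult_le_compat_l; [left; apply Rdiv_lt_0_compat; lra|exact Hlip].
Qed.

Lemma continuous_pair {U V W : UniformSpace} (f : U -> V) (g : U -> W) (x : U) :
  continuous f x -> continuous g x -> continuous (fun y => (f y, g y)) x.
Proof.
  intros Hf Hg. apply (continuous_comp_2 f g pair); [exact Hf|exact Hg|].
  apply (continuous_ext (fun p => p)); [intros [? ?]; reflexivity|apply continuous_id].
Qed.

Definition sum3 (f : axis -> R) : R := f ax + f ay + f az.

Lemma V3_eta (v : V3) : v = mk3 (vc v ax) (vc v ay) (vc v az).
Proof. destruct v as [[? ?] ?]; reflexivity. Qed.

Lemma upd_vc (v : V3) (i : axis) : upd v i (vc v i) = v.
Proof. destruct v as [[? ?] ?]; destruct i; reflexivity. Qed.

Lemma C1_is_derive_t f t X : IsC1 f -> is_derive (fun s => f s X) t (pd_t f t X).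
Proof. intros Hf. apply Derive_correct, (Hf t X). Qed.

Lemma C1_is_derive_x f t X i :
  IsC1 f -> is_derive (fun s => f t (upd X i s)) (vc X i) (pd_x f t X i).
Proof. intros Hf. apply Derive_correct, (Hf t X). Qed.

Ltac continuous_path := unfold mk3; repeat first
  [ apply continuous_pair | apply continuous_const | apply continuous_snd
  | apply (continuous_comp fst); [apply continuous_fst|assumption] ].

Lemma is_derive_C1_comp (f : R -> V3 -> R) (T : R -> R) (X : R -> V3)
    (s0 dT : R) (dX : axis -> R) :
  IsC1 f -> is_derive T s0 dT ->
  (forall i, is_derive (fun s => vc (X s) i) s0 (dX i)) ->
  is_derive (fun s => f (T s) (X s)) s0
    (pd_t f (T s0) (X s0) * dT + sum3 (fun i => pd_x f (T s0) (X s0) i * dX i)).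
Proof.
  intros Hf HT HX.
  set (xs := fun s => vc (X s) ax); set (ys := fun s => vc (X s) ay);
    set (zs := fun s => vc (X s) az).
  set (T0 := T s0); set (x0 := xs s0); set (y0 := ys s0); set (z0 := zs s0).
  assert (Hcx := is_derive_continuous xs s0 _ (HX ax)).
  assert (Hcy := is_derive_continuous ys s0 _ (HX ay)).
  assert (Hcz := is_derive_continuous zs s0 _ (HX az)).
  assert (Hpt : continuous (fun p : R * V3 => pd_t f (fst p) (snd p)) (T0, mk3 x0 y0 z0))
    by exact (proj1 (proj2 (proj2 (Hf T0 (mk3 x0 y0 z0))))).
  assert (Hpx : forall i,
      continuous (fun p : R * V3 => pd_x f (fst p) (snd p) i) (T0, mk3 x0 y0 z0))
    by exact (proj2 (proj2 (proj2 (Hf T0 (mk3 x0 y0 z0))))).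
  (* Telescope: move T, then the x, y and z coordinates, one at a time. *)
  assert (I0 : is_derive (fun s => f (T s) (mk3 (xs s) (ys s) (zs s))
                                 - f T0 (mk3 (xs s) (ys s) (zs s)))
                 s0 (pd_t f T0 (mk3 x0 y0 z0) * dT)).
  { apply (is_derive_partial_increment (fun s r => f r (mk3 (xs s) (ys s) (zs s)))
             (fun s r => pd_t f r (mk3 (xs s) (ys s) (zs s)))); [| |exact HT].
    - intros s r; apply C1_is_derive_t, Hf.
    - apply (continuous_comp (fun p : R * R => (snd p, mk3 (xs (fst p)) (ys (fst p)) (zs (fst p))))
               (fun q : R * V3 => pd_t f (fst q) (snd q))); [continuous_path|exact Hpt]. }
  assert (I1 : is_derive (fun s => f T0 (mk3 (xs s) (ys s) (zs s)) - f T0 (mk3 x0 (ys s) (zs s)))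
                 s0 (pd_x f T0 (mk3 x0 y0 z0) ax * dX ax)).
  { apply (is_derive_partial_increment (fun s r => f T0 (mk3 r (ys s) (zs s)))
             (fun s r => pd_x f T0 (mk3 r (ys s) (zs s)) ax)); [| |exact (HX ax)].
    - intros s r; apply (C1_is_derive_x f T0 (mk3 r (ys s) (zs s)) ax Hf).
    - apply (continuous_comp (fun p : R * R => (T0, mk3 (snd p) (ys (fst p)) (zs (fst p))))
               (fun q : R * V3 => pd_x f (fst q) (snd q) ax)); [continuous_path|exact (Hpx ax)]. }
  assert (I2 : is_derive (fun s => f T0 (mk3 x0 (ys s) (zs s)) - f T0 (mk3 x0 y0 (zs s)))
                 s0 (pd_x f T0 (mk3 x0 y0 z0) ay * dX ay)).
  { apply (is_derive_partial_increment (fun s r => f T0 (mk3 x0 r (zs s)))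
             (fun s r => pd_x f T0 (mk3 x0 r (zs s)) ay)); [| |exact (HX ay)].
    - intros s r; apply (C1_is_derive_x f T0 (mk3 x0 r (zs s)) ay Hf).
    - apply (continuous_comp (fun p : R * R => (T0, mk3 x0 (snd p) (zs (fst p))))
               (fun q : R * V3 => pd_x f (fst q) (snd q) ay)); [continuous_path|exact (Hpx ay)]. }
  assert (I3 : is_derive (fun s => f T0 (mk3 x0 y0 (zs s)) - f T0 (mk3 x0 y0 z0))
                 s0 (pd_x f T0 (mk3 x0 y0 z0) az * dX az)).
  { apply (is_derive_partial_increment (fun _ r => f T0 (mk3 x0 y0 r))
             (fun _ r => pd_x f T0 (mk3 x0 y0 r) az)); [| |exact (HX az)].
    - intros s r; apply (C1_is_derive_x f T0 (mk3 x0 y0 r) az Hf).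
    - apply (continuous_comp (fun p : R * R => (T0, mk3 x0 y0 (snd p)))
               (fun q : R * V3 => pd_x f (fst q) (snd q) az)); [continuous_path|exact (Hpx az)]. }
  assert (Hsum := is_derive_Rplus _ _ _ _ _
    (is_derive_Rplus _ _ _ _ _ I0 (is_derive_Rplus _ _ _ _ _ (is_derive_Rplus _ _ _ _ _ I1 I2) I3))
    (is_derive_Rconst (f T0 (mk3 x0 y0 z0)) s0)).
  rewrite Rplus_0_r in Hsum. rewrite (V3_eta (X s0)). unfold sum3.
  eapply is_derive_ext; [|exact Hsum].
  intros s; cbv beta. rewrite (V3_eta (X s)). fold (xs s) (ys s) (zs s). simpl; ring.
Qed.

Lemma locally_image (xi : R -> R) (t0 d : R) (P : R -> Prop) :
  0 < d -> is_derive xi t0 d -> locally t0 (fun t => continuous xi t) -> locally t0 P ->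
  locally (xi t0) (fun u => exists t, P t /\ xi t = u).
Proof.
  intros Hd Hxi Hc HP.
  assert (Hr := proj1 (is_derive_remainder xi t0 d) Hxi (d / 2) ltac:(lra)).
  destruct (filter_and _ _ Hc (filter_and _ _ HP Hr)) as [del Hdel].
  set (rho := del / 2).
  assert (Hrho : 0 < rho) by (unfold rho; pose proof (cond_pos del); lra).
  assert (Hin : forall t, Rabs (t - t0) <= rho -> ball t0 del t).
  { intros t Ht. change (Rabs (t - t0) < del). unfold rho in Ht; pose proof (cond_pos del); lra. }
  assert (Hp : Rabs (t0 + rho - t0) <= rho)
    by (replace (t0 + rho - t0) with rho by ring; rewrite Rabs_pos_eq; lra).
  assert (Hm : Rabs (t0 - rho - t0) <= rho)
    by (replace (t0 - rho - t0) with (- rho) by ring; rewrite Rabs_Ropp, Rabs_pos_eq; lra).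
  destruct (Hdel _ (Hin _ Hp)) as [_ [_ Hup]]; destruct (Hdel _ (Hin _ Hm)) as [_ [_ Hdn]].
  replace (t0 + rho - t0) with rho in Hup by ring.
  replace (t0 - rho - t0) with (- rho) in Hdn by ring.
  rewrite (Rabs_pos_eq rho) in Hup by lra; rewrite Rabs_Ropp, (Rabs_pos_eq rho) in Hdn by lra.
  apply Rabs_le_between in Hup; apply Rabs_le_between in Hdn.
  exists (mkposreal (d * rho / 2) ltac:(apply Rdiv_lt_0_compat; [apply Rmult_lt_0_compat|]; lra)).
  intros u Hu. change (Rabs (u - xi t0) < d * rho / 2) in Hu. apply Rabs_def2 in Hu.
  destruct (IVT_interv (fun t => xi t - u) (t0 - rho) (t0 + rho)) as [t [Ht Hxt]].
  - intros t Ht. apply continuity_pt_minus; [|apply continuity_pt_const; intros ? ?; reflexivity].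
    apply continuity_pt_filterlim, (Hdel t), Hin, Rabs_le_between; lra.
  - lra.
  - cbv beta; nra.
  - cbv beta; nra.
  - exists t. split; [apply (Hdel t), Hin, Rabs_le_between; lra|cbv beta in Hxt; lra].
Qed.

Lemma is_derive_reparam (xi F G : R -> R) (t0 d g : R) :
  0 < d -> is_derive xi t0 d -> locally t0 (fun t => continuous xi t) ->
  locally t0 (fun t => F (xi t) = G t) -> is_derive G t0 g ->
  is_derive F (xi t0) (g / d).
Proof.
  intros Hd Hxi Hc HFG HG.
  set (H := fun t => G t - g / d * xi t).
  assert (HH : is_derive H t0 0).
  { replace 0 with (g - g / d * d) by (field; lra).
    apply is_derive_Rminus; [exact HG|apply is_derive_scal, Hxi]. }
  apply is_derive_remainder; intros eps Heps.
  assert (HrH := proj1 (is_derive_remainder H t0 0) HH (eps * d / 2) ltac:(nra)).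
  assert (Hrxi := proj1 (is_derive_remainder xi t0 d) Hxi (d / 2) ltac:(lra)).
  rewrite (locally_singleton _ _ HFG).
  generalize (locally_image xi t0 d _ Hd Hxi Hc (filter_and _ _ HFG (filter_and _ _ HrH Hrxi))).
  apply filter_imp; intros u [t [[HFt [Ht Hxit]] <-]].
  rewrite HFt. unfold H in Ht.
  replace (G t - G t0 - g / d * (xi t - xi t0))
    with (G t - g / d * xi t - (G t0 - g / d * xi t0) - 0 * (t - t0)) by ring.
  assert (Hlow : d / 2 * Rabs (t - t0) <= Rabs (xi t - xi t0)).
  { replace (xi t - xi t0) with ((xi t - xi t0 - d * (t - t0)) + d * (t - t0)) by ring.
    pose proof (Rabs_triang_inv (d * (t - t0)) (- (xi t - xi t0 - d * (t - t0)))) as Htri.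
    rewrite Rabs_Ropp, Rabs_mult, (Rabs_pos_eq d) in Htri by lra.
    replace (d * (t - t0) - - (xi t - xi t0 - d * (t - t0))) with
      (xi t - xi t0 - d * (t - t0) + d * (t - t0)) in Htri by ring.
    lra. }
  eapply Rle_trans; [exact Ht|]. nra.
Qed.

Lemma is_derive_sqrt_radicand (c t : R) (v : axis -> R -> R) (dv : axis -> R) :
  0 < c -> (forall j, is_derive (v j) t (dv j)) -> 0 < 1 - sum3 (fun j => v j t * v j t) / c ^ 2 ->
  is_derive (fun s => sqrt (1 - sum3 (fun j => v j s * v j s) / c ^ 2)) t
    (- sum3 (fun j => v j t * dv j) / (c ^ 2 * sqrt (1 - sum3 (fun j => v j t * v j t) / c ^ 2))).
Proof.
  intros Hc Hv Hpos. unfold sum3 in *.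
  assert (Hc2 : 0 < c ^ 2) by (apply pow_lt, Hc). set (c2 := c ^ 2) in *.
  assert (H1 := Hv ax); assert (H2 := Hv ay); assert (H3 := Hv az).
  auto_derive.
  - repeat split; try (eexists; eassumption). exact Hpos.
  - rewrite (is_derive_unique (fun s : R => v ax s) _ _ H1),
      (is_derive_unique (fun s : R => v ay s) _ _ H2),
      (is_derive_unique (fun s : R => v az s) _ _ H3).
    pose proof (sqrt_lt_R0 _ Hpos). unfold Rminus, Rdiv in *. field. lra.
Qed.

Lemma is_derive_momentum_form (m q c : R) (u S g : R -> R) (t du dS dg : R) :
  c <> 0 -> S t <> 0 -> is_derive u t du -> is_derive S t dS -> is_derive g t dg ->
  is_derive (fun s => m * u s / S s + q * g s / c) t
    (m * du / S t - m * u t * dS / (S t * S t) + q * dg / c).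
Proof.
  intros Hc HS Hu HS' Hg. auto_derive.
  - repeat split; try (eexists; eassumption); assumption.
  - rewrite (is_derive_unique (fun s : R => u s) _ _ Hu),
      (is_derive_unique (fun s : R => S s) _ _ HS'), (is_derive_unique (fun s : R => g s) _ _ Hg).
    field. split; assumption.
Qed.

Lemma is_derive_energy_form (m q c : R) (S g : R -> R) (t dS dg : R) :
  S t <> 0 -> is_derive S t dS -> is_derive g t dg ->
  is_derive (fun s => m * c ^ 2 / S s + q * g s) t (- m * c ^ 2 * dS / (S t * S t) + q * dg).
Proof.
  intros HS HS' Hg. auto_derive.
  - repeat split; try (eexists; eassumption); assumption.
  - rewrite (is_derive_unique (fun s : R => S s) _ _ HS'), (is_derive_unique (fun s : R => g s) _ _ Hg).
    field. assumption.
Qed.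

Definition inv_gamma (c : R) (V : V3) : R := sqrt (1 - dot V V / c ^ 2).

Definition momentum (m c q : R) (A : R -> V3 -> V3) (X V : V3) (t : R) (i : axis) : R :=
  m * vc V i / inv_gamma c V + q * vc (A t X) i / c.

(* The Hamiltonian [v . momentum - Lrel], written out. *)
Definition energy (m c q : R) (A0 : R -> V3 -> R) (X V : V3) (t : R) : R :=
  m * c ^ 2 / inv_gamma c V + q * A0 t X.

Definition Acomp (A : R -> V3 -> V3) (i : axis) : R -> V3 -> R := fun t X => vc (A t X) i.

Definition pdT (L : Lag) (X V : V3) (t : R) : R := Derive (fun s => L X V s) t.

Lemma subluminal_radicand_pos (c : R) (V : V3) :
  0 < c -> dot V V < c ^ 2 -> 0 < 1 - dot V V / c ^ 2.
Proof.
  intros Hc HV. assert (Hc2 : 0 < c ^ 2) by (apply pow_lt; lra).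
  apply Rlt_0_minus. apply (Rmult_lt_reg_r (c ^ 2)); [exact Hc2|].
  unfold Rdiv; rewrite Rmult_assoc, Rinv_l by lra. lra.
Qed.

Lemma inv_gamma_pos (c : R) (V : V3) : 0 < c -> dot V V < c ^ 2 -> 0 < inv_gamma c V.
Proof. intros Hc HV. apply sqrt_lt_R0, subluminal_radicand_pos; assumption. Qed.

Lemma inv_gamma_sqr (c : R) (V : V3) :
  0 < c -> dot V V < c ^ 2 -> inv_gamma c V * inv_gamma c V = 1 - dot V V / c ^ 2.
Proof. intros Hc HV. apply sqrt_sqrt. left; apply subluminal_radicand_pos; assumption. Qed.

Lemma is_derive_Lrel_velocity m c q A0 A X V t i :
  0 < c -> dot V V < c ^ 2 ->
  is_derive (fun s => Lrel m c q A0 A X (upd V i s) t) (vc V i) (momentum m c q A X V t i).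
Proof.
  intros Hc HV.
  assert (Hpos := subluminal_radicand_pos c V Hc HV).
  unfold Lrel, momentum, inv_gamma. unfold dot in *.
  destruct V as [[v1 v2] v3]; destruct i; simpl in *;
    auto_derive; try (split; [|exact I]); try lra.
  all: unfold Rminus, Rdiv in *; pose proof (sqrt_lt_R0 _ Hpos); field; lra.
Qed.

Lemma pdV_Lrel m c q A0 A X V t i :
  0 < c -> dot V V < c ^ 2 -> pdV (Lrel m c q A0 A) X V t i = momentum m c q A X V t i.
Proof. intros Hc HV. apply is_derive_unique, is_derive_Lrel_velocity; assumption. Qed.

Lemma is_derive_potential_term (K q c : R) (w : axis -> R) (g0 : R -> R)
    (g : axis -> R -> R) (s0 d0 : R) (d : axis -> R) :
  is_derive g0 s0 d0 -> (forall k, is_derive (g k) s0 (d k)) ->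
  is_derive (fun s => K - q * (g0 s - sum3 (fun k => g k s * w k) / c)) s0
    (- q * (d0 - sum3 (fun k => d k * w k) / c)).
Proof.
  intros H0 Hg. unfold sum3.
  assert (Hx := Hg ax); assert (Hy := Hg ay); assert (Hz := Hg az).
  auto_derive.
  - repeat split; eexists; eassumption.
  - rewrite (is_derive_unique (fun s : R => g0 s) _ _ H0),
      (is_derive_unique (fun s : R => g ax s) _ _ Hx),
      (is_derive_unique (fun s : R => g ay s) _ _ Hy),
      (is_derive_unique (fun s : R => g az s) _ _ Hz).
    unfold Rdiv; ring.
Qed.

Lemma pdX_Lrel m c q A0 A X V t i :
  IsC1 A0 -> (forall k, IsC1 (Acomp A k)) ->
  pdX (Lrel m c q A0 A) X V t i
  = - q * (pd_x A0 t X i - sum3 (fun k => pd_x (Acomp A k) t X i * vc V k) / c).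
Proof.
  intros HA0 HA. apply is_derive_unique.
  exact (is_derive_potential_term (- m * c ^ 2 * sqrt (1 - dot V V / c ^ 2)) q c (vc V)
           (fun s => A0 t (upd X i s)) (fun k s => Acomp A k t (upd X i s)) _ _ _
           (C1_is_derive_x _ t X i HA0) (fun k => C1_is_derive_x _ t X i (HA k))).
Qed.

Lemma pdT_Lrel m c q A0 A X V t :
  IsC1 A0 -> (forall k, IsC1 (Acomp A k)) ->
  pdT (Lrel m c q A0 A) X V t
  = - q * (pd_t A0 t X - sum3 (fun k => pd_t (Acomp A k) t X * vc V k) / c).
Proof.
  intros HA0 HA. apply is_derive_unique.
  exact (is_derive_potential_term (- m * c ^ 2 * sqrt (1 - dot V V / c ^ 2)) q c (vc V)
           (fun s => A0 s X) (fun k s => Acomp A k s X) _ _ _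
           (C1_is_derive_t _ t X HA0) (fun k => C1_is_derive_t _ t X (HA k))).
Qed.

Lemma is_derive_C1_along_z (f : R -> V3 -> R) (c xi : R) (X : V3) :
  IsC1 f -> c <> 0 ->
  is_derive (fun s => f ((xi + s) / c) (upd X az s)) (vc X az)
    (pd_t f ((xi + vc X az) / c) X / c + pd_x f ((xi + vc X az) / c) X az).
Proof.
  intros Hf Hc.
  assert (H := is_derive_C1_comp f (fun s => (xi + s) / c) (fun s => upd X az s) (vc X az) (/ c)
                 (fun i => match i with az => 1 | _ => 0 end) Hf).
  rewrite upd_vc in H. unfold sum3 in H.
  replace (pd_t f ((xi + vc X az) / c) X / c + pd_x f ((xi + vc X az) / c) X az)
    with (pd_t f ((xi + vc X az) / c) X * / c + (pd_x f ((xi + vc X az) / c) X ax * 0 +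
          pd_x f ((xi + vc X az) / c) X ay * 0 + pd_x f ((xi + vc X az) / c) X az * 1))
    by (unfold Rdiv; ring).
  apply H.
  - auto_derive; [exact I|field; exact Hc].
  - destruct X as [[? ?] ?]; intros [| |]; simpl; auto_derive; auto.
Qed.

Section HatFrame.
Variables (c : R) (X W : V3) (xi : R).
Let k := c / (1 + vc W az).
Let V := Defs.scal k W.
Let t := (xi + vc X az) / c.

Lemma pdX_Lhat_perp (L : Lag) (i : axis) :
  i <> az -> pdX (Lhat c L) X W xi i = (1 + vc W az) * pdX L X V t i.
Proof.
  intros Hi. unfold pdX, Lhat. rewrite <- Derive_scal.
  apply Derive_ext; intros s. destruct i; [reflexivity|reflexivity|contradiction].
Qed.

Lemma pdV_Lhat_perp m q A0 A (i : axis) :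
  0 < c -> 0 < 1 + vc W az -> i <> az -> dot V V < c ^ 2 ->
  pdV (Lhat c (Lrel m c q A0 A)) X W xi i = c * momentum m c q A X V t i.
Proof.
  intros Hc HW Hi HV. apply is_derive_unique.
  replace (c * momentum m c q A X V t i) with ((1 + vc W az) * (k * momentum m c q A X V t i))
    by (unfold k; field; lra).
  apply (is_derive_ext (fun s => (1 + vc W az) * Lrel m c q A0 A X (upd V i (k * s)) t)).
  { intros s. unfold Lhat, V. destruct W as [[? ?] ?]; destruct i; [reflexivity|reflexivity|contradiction]. }
  apply is_derive_scal.
  apply (is_derive_comp (fun r => Lrel m c q A0 A X (upd V i r) t) (fun s => k * s)).
  - replace (k * vc W i) with (vc V i) by (unfold V; destruct i; reflexivity).
    apply is_derive_Lrel_velocity; assumption.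
  - auto_derive; [exact I|ring].
Qed.

Lemma pdX_Lhat_z m q A0 A :
  0 < c -> IsC1 A0 -> (forall j, IsC1 (Acomp A j)) ->
  pdX (Lhat c (Lrel m c q A0 A)) X W xi az
  = (1 + vc W az) * (pdX (Lrel m c q A0 A) X V t az + pdT (Lrel m c q A0 A) X V t / c).
Proof.
  intros Hc HA0 HA.
  rewrite pdX_Lrel, pdT_Lrel by assumption.
  apply is_derive_unique.
  set (dz := fun f : R -> V3 -> R => pd_t f t X / c + pd_x f t X az).
  replace (_ * (_ + _)) with ((1 + vc W az) * (- q * (dz A0 - sum3 (fun j => dz (Acomp A j) * vc V j) / c)))
    by (unfold dz, sum3, Rdiv; ring).
  apply (is_derive_ext (fun s => (1 + vc W az) * Lrel m c q A0 A (upd X az s) V ((xi + s) / c)));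
    [reflexivity|].
  apply is_derive_scal.
  exact (is_derive_potential_term (- m * c ^ 2 * sqrt (1 - dot V V / c ^ 2)) q c (vc V)
      (fun s => A0 ((xi + s) / c) (upd X az s)) (fun j s => Acomp A j ((xi + s) / c) (upd X az s))
      _ _ _ (is_derive_C1_along_z _ c xi X HA0 ltac:(lra))
      (fun j => is_derive_C1_along_z _ c xi X (HA j) ltac:(lra))).
Qed.

(* d/dz' [(1 + z') L (c x' / (1 + z'))] = L - v.p + c p_z. *)
Lemma pdV_Lhat_z m q A0 A :
  0 < c -> 0 < 1 + vc W az -> dot V V < c ^ 2 ->
  pdV (Lhat c (Lrel m c q A0 A)) X W xi az
  = c * momentum m c q A X V t az - energy m c q A0 X V t.
Proof.
  intros Hc HW HV.
  assert (Hpos := subluminal_radicand_pos c V Hc HV).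
  assert (HS2 := inv_gamma_sqr c V Hc HV).
  unfold momentum, energy, inv_gamma in *.
  set (S := sqrt (1 - dot V V / c ^ 2)) in *.
  assert (HS : 0 < S) by (apply sqrt_lt_R0, Hpos).
  apply is_derive_unique.
  unfold pdV, Lhat, Lrel. change ((xi + vc X az) / c) with t.
  set (a0 := A0 t X). set (AtX := A t X).
  unfold V, k, dot, Defs.scal in *.
  destruct W as [[w1 w2] w3]. destruct AtX as [[a1 a2] a3]. simpl in *.
  auto_derive.
  all: try (repeat split; try lra; exact Hpos).
  match goal with |- context [sqrt ?u] => replace (sqrt u) with S by (unfold S; f_equal; field; lra) end.
  replace (- m * (c * (c * 1)) * S) with (- m * (c * (c * 1)) * (S * S) / S) by (field; lra).
  rewrite HS2. field. repeat split; lra.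
Qed.

End HatFrame.

Lemma unitriangular_zero_iff (k al be : R) (r rh : axis -> R) :
  k <> 0 -> rh ax = k * r ax -> rh ay = k * r ay -> rh az = r az - al * r ax - be * r ay ->
  (forall i, r i = 0) <-> (forall i, rh i = 0).
Proof.
  intros Hk Hx Hy Hz. split; intros H.
  - intros []; [rewrite Hx, H|rewrite Hy, H|rewrite Hz, !H]; ring.
  - assert (Ex : r ax = 0) by (apply (Rmult_eq_reg_l k); [rewrite <- Hx, H; ring|exact Hk]).
    assert (Ey : r ay = 0) by (apply (Rmult_eq_reg_l k); [rewrite <- Hy, H; ring|exact Hk]).
    intros []; [exact Ex|exact Ey|]. specialize (H az). rewrite Hz, Ex, Ey in H. lra.
Qed.

Definition EL_residual (L : Lag) (Q : Force) (p : R -> V3) (t : R) (i : axis) : R :=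
  Derive (fun s => pdV L (p s) (vel p s) s i) t - pdX L (p t) (vel p t) t i
  - vc (Q (p t) (vel p t) t) i.

Lemma EL_iff_residual (L : Lag) (Q : Force) (p : R -> V3) (t : R) :
  EL L Q p t <-> forall i, EL_residual L Q p t i = 0.
Proof. unfold EL, EL_residual. split; intros H i; specialize (H i); lra. Qed.

Definition total_deriv (f : R -> V3 -> R) (t : R) (X V : V3) : R :=
  pd_t f t X + sum3 (fun k => pd_x f t X k * vc V k).

Lemma kinetic_power (c m S dS : R) (v acc : axis -> R) :
  0 < c -> 0 < S ->
  S * S = 1 - sum3 (fun j => v j * v j) / c ^ 2 ->
  dS = - sum3 (fun j => v j * acc j) / (c ^ 2 * S) ->
  - m * c ^ 2 * dS / (S * S)
  = sum3 (fun j => v j * (m * acc j / S - m * v j * dS / (S * S))).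
Proof.
  intros Hc HS HS2 HdS.
  assert (Hv2 : sum3 (fun j => v j * v j) = c ^ 2 * (1 - S * S)) by (rewrite HS2; field; lra).
  transitivity (m * sum3 (fun j => v j * acc j) / S - m * sum3 (fun j => v j * v j) * dS / (S * S));
    [|unfold sum3; field; lra].
  rewrite Hv2, HdS. field. lra.
Qed.

Lemma field_power (c q dtA0 : R) (dA0 dtA v : axis -> R) (dA : axis -> axis -> R) :
  c <> 0 ->
  q * (dtA0 + sum3 (fun k => dA0 k * v k))
  = sum3 (fun j => v j * (q * (dtA j + sum3 (fun k => dA j k * v k)) / c
                          + q * (dA0 j - sum3 (fun k => dA k j * v k) / c)))
    + q * (dtA0 - sum3 (fun k => dtA k * v k) / c).
Proof. intros Hc. unfold sum3. field. exact Hc. Qed.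

Lemma in_I_locally (a b : Rbar) (t : R) : in_I a b t -> locally t (in_I a b).
Proof. intros [Ha Hb]. destruct (Rbar_lt_locally a b t Ha Hb) as [d Hd]. now exists d. Qed.

Lemma z_speed_lt (c : R) (V : V3) : 0 < c -> dot V V < c ^ 2 -> vc V az < c.
Proof.
  intros Hc HV. unfold dot in HV.
  assert (vc V az * vc V az < c * c) by nra. nra.
Qed.

Section Reparametrization.
Variables (c : R) (a b : Rbar) (x xh : R -> V3).
Hypothesis Hc : 0 < c.
Hypothesis Hx : forall t, in_I a b t -> forall i,
  ex_derive (fun s => vc (x s) i) t /\ ex_derive (fun s => vc (vel x s) i) t.
Hypothesis Hv : forall t, in_I a b t -> dot (vel x t) (vel x t) < c ^ 2.
Hypothesis Hxh : forall t, in_I a b t -> xh (c * t - vc (x t) az) = x t.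

Let xi (t : R) : R := c * t - vc (x t) az.

Lemma is_derive_position (t : R) (i : axis) :
  in_I a b t -> is_derive (fun s => vc (x s) i) t (vc (vel x t) i).
Proof.
  intros Ht. replace (vc (vel x t) i) with (Derive (fun s => vc (x s) i) t) by now destruct i.
  apply Derive_correct, (proj1 (Hx t Ht i)).
Qed.

Lemma is_derive_velocity (t : R) (i : axis) :
  in_I a b t -> is_derive (fun s => vc (vel x s) i) t (Derive (fun s => vc (vel x s) i) t).
Proof. intros Ht. apply Derive_correct, (proj2 (Hx t Ht i)). Qed.

Lemma is_derive_xi (t : R) : in_I a b t -> is_derive xi t (c - vc (vel x t) az).
Proof.
  intros Ht. apply is_derive_Rminus; [|apply is_derive_position, Ht].
  auto_derive; [exact I|ring].
Qed.

Lemma is_derive_through_xi (F G : R -> R) (t g : R) :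
  in_I a b t -> (forall s, in_I a b s -> F (xi s) = G s) -> is_derive G t g ->
  is_derive F (xi t) (g / (c - vc (vel x t) az)).
Proof.
  intros Ht HFG HG.
  assert (Hnear := in_I_locally a b t Ht).
  apply (is_derive_reparam xi F G); [| apply is_derive_xi, Ht | | | exact HG].
  - pose proof (z_speed_lt c _ Hc (Hv t Ht)); lra.
  - revert Hnear; apply filter_imp; intros s Hs.
    exact (is_derive_continuous _ _ _ (is_derive_xi s Hs)).
  - revert Hnear; apply filter_imp; exact HFG.
Qed.

Lemma vel_xh (t : R) (i : axis) :
  in_I a b t -> vc (vel xh (xi t)) i = vc (vel x t) i / (c - vc (vel x t) az).
Proof.
  intros Ht.
  assert (H : is_derive (fun u => vc (xh u) i) (xi t) (vc (vel x t) i / (c - vc (vel x t) az))).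
  { apply (is_derive_through_xi _ (fun s => vc (x s) i)); [exact Ht| |apply is_derive_position, Ht].
    intros s Hs. unfold xi. now rewrite Hxh. }
  rewrite <- (is_derive_unique _ _ _ H). now destruct i.
Qed.

Lemma hat_time_factor (t : R) :
  in_I a b t -> 1 + vc (vel xh (xi t)) az = c / (c - vc (vel x t) az).
Proof.
  intros Ht. pose proof (z_speed_lt c _ Hc (Hv t Ht)).
  rewrite vel_xh by exact Ht. field. lra.
Qed.

Lemma lab_velocity (t : R) :
  in_I a b t ->
  Defs.scal (c / (1 + vc (vel xh (xi t)) az)) (vel xh (xi t)) = vel x t.
Proof.
  intros Ht. pose proof (z_speed_lt c _ Hc (Hv t Ht)).
  rewrite hat_time_factor by exact Ht. unfold Defs.scal. rewrite !vel_xh by exact Ht.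
  transitivity (mk3 (vc (vel x t) ax) (vc (vel x t) ay) (vc (vel x t) az)); [|symmetry; apply V3_eta].
  unfold mk3; f_equal; [f_equal|]; field; lra.
Qed.

Lemma xh_xi (s : R) : in_I a b s -> xh (xi s) = x s.
Proof. apply Hxh. Qed.

Lemma lab_time (t : R) : in_I a b t -> (xi t + vc (xh (xi t)) az) / c = t.
Proof. intros Ht. unfold xi. rewrite Hxh by exact Ht. field. lra. Qed.

Lemma is_derive_inv_gamma (t : R) :
  in_I a b t ->
  is_derive (fun s => inv_gamma c (vel x s)) t
    (- sum3 (fun j => vc (vel x t) j * Derive (fun s => vc (vel x s) j) t)
     / (c ^ 2 * inv_gamma c (vel x t))).
Proof.
  intros Ht.
  assert (Hpos := subluminal_radicand_pos c _ Hc (Hv t Ht)).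
  exact (is_derive_sqrt_radicand c t (fun j s => vc (vel x s) j) _ Hc
           (fun j => is_derive_velocity t j Ht) Hpos).
Qed.

Variables (m q : R) (A0 : R -> V3 -> R) (A : R -> V3 -> V3) (Q : Force).
Hypothesis HA0 : IsC1 A0.
Hypothesis HA : forall j, IsC1 (Acomp A j).

Let L := Lrel m c q A0 A.
Let P (j : axis) (s : R) : R := momentum m c q A (x s) (vel x s) s j.
Let E (s : R) : R := energy m c q A0 (x s) (vel x s) s.

Lemma is_derive_along_curve (f : R -> V3 -> R) (t : R) :
  IsC1 f -> in_I a b t -> is_derive (fun s => f s (x s)) t (total_deriv f t (x t) (vel x t)).
Proof.
  intros Hf Ht.
  assert (Hid : is_derive (fun s : R => s) t 1) by (auto_derive; auto).
  assert (H := is_derive_C1_comp f (fun s => s) x t 1 (vc (vel x t)) Hf Hid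
                 (fun i => is_derive_position t i Ht)).
  rewrite Rmult_1_r in H. exact H.
Qed.

Lemma is_derive_momentum (j : axis) (t : R) :
  in_I a b t ->
  is_derive (P j) t
    (m * Derive (fun s => vc (vel x s) j) t / inv_gamma c (vel x t)
     - m * vc (vel x t) j * (- sum3 (fun k => vc (vel x t) k * Derive (fun s => vc (vel x s) k) t)
                             / (c ^ 2 * inv_gamma c (vel x t)))
       / (inv_gamma c (vel x t) * inv_gamma c (vel x t))
     + q * total_deriv (Acomp A j) t (x t) (vel x t) / c).
Proof.
  intros Ht. pose proof (inv_gamma_pos c _ Hc (Hv t Ht)).
  exact (is_derive_momentum_form m q c _ (fun s => inv_gamma c (vel x s)) (fun s => Acomp A j s (x s))
           t _ _ _ ltac:(lra) ltac:(lra) (is_derive_velocity t j Ht) (is_derive_inv_gamma t Ht)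
           (is_derive_along_curve _ t (HA j) Ht)).
Qed.

Lemma energy_balance (t : R) :
  in_I a b t ->
  is_derive E t
    (sum3 (fun j => vc (vel x t) j * (Derive (P j) t - pdX L (x t) (vel x t) t j))
     - pdT L (x t) (vel x t) t).
Proof.
  intros Ht.
  assert (HS := inv_gamma_pos c _ Hc (Hv t Ht)).
  assert (HS2 := inv_gamma_sqr c _ Hc (Hv t Ht)).
  set (S := inv_gamma c (vel x t)) in *.
  assert (HE := is_derive_energy_form m q c (fun s => inv_gamma c (vel x s)) (fun s => A0 s (x s))
                  t _ _ (Rgt_not_eq _ _ HS) (is_derive_inv_gamma t Ht)
                  (is_derive_along_curve _ t HA0 Ht)).
  cbv beta in HE; fold S in HE.
  match type of HE with is_derive _ _ ?v => replace (_ - _) with v; [exact HE|] end.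
  rewrite (kinetic_power c m S _ (vc (vel x t)) (fun j => Derive (fun s => vc (vel x s) j) t)
             Hc HS HS2 eq_refl).
  unfold total_deriv.
  rewrite (field_power c q (pd_t A0 t (x t)) (fun k => pd_x A0 t (x t) k)
             (fun j => pd_t (Acomp A j) t (x t)) (vc (vel x t))
             (fun j k => pd_x (Acomp A j) t (x t) k)) by lra.
  unfold L. rewrite pdT_Lrel by assumption.
  unfold sum3. rewrite !pdX_Lrel by assumption.
  rewrite !(is_derive_unique _ _ _ (is_derive_momentum _ t Ht)).
  fold S. unfold total_deriv, sum3, Rdiv. ring.
Qed.

Let Lh := Lhat c L.

Lemma ex_derive_momentum (j : axis) (t : R) : in_I a b t -> ex_derive (P j) t.
Proof. intros Ht. eexists. exact (is_derive_momentum j t Ht). Qed.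

Lemma Derive_lab_momentum (j : axis) (t : R) :
  in_I a b t -> Derive (fun s => pdV L (x s) (vel x s) s j) t = Derive (P j) t.
Proof.
  intros Ht. apply Derive_ext_loc.
  apply (filter_imp (in_I a b)); [|exact (in_I_locally a b t Ht)].
  intros s Hs. unfold L. rewrite pdV_Lrel by auto. reflexivity.
Qed.

Lemma hat_subluminal (s : R) :
  in_I a b s ->
  0 < 1 + vc (vel xh (xi s)) az /\
  dot (Defs.scal (c / (1 + vc (vel xh (xi s)) az)) (vel xh (xi s)))
      (Defs.scal (c / (1 + vc (vel xh (xi s)) az)) (vel xh (xi s))) < c ^ 2.
Proof.
  intros Hs. rewrite lab_velocity by exact Hs. split; [|exact (Hv s Hs)].
  rewrite hat_time_factor by exact Hs.
  pose proof (z_speed_lt c _ Hc (Hv s Hs)). apply Rdiv_lt_0_compat; lra.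
Qed.

Lemma hat_momentum_perp (s : R) (i : axis) :
  in_I a b s -> i <> az -> pdV Lh (xh (xi s)) (vel xh (xi s)) (xi s) i = c * P i s.
Proof.
  intros Hs Hi. destruct (hat_subluminal s Hs) as [HW HV].
  unfold Lh, L. rewrite pdV_Lhat_perp by assumption.
  rewrite lab_velocity, lab_time, xh_xi by exact Hs. reflexivity.
Qed.

Lemma hat_momentum_z (s : R) :
  in_I a b s -> pdV Lh (xh (xi s)) (vel xh (xi s)) (xi s) az = c * P az s - E s.
Proof.
  intros Hs. destruct (hat_subluminal s Hs) as [HW HV].
  unfold Lh, L. rewrite pdV_Lhat_z by assumption.
  rewrite lab_velocity, lab_time, xh_xi by exact Hs. reflexivity.
Qed.

Lemma hat_pdX_perp (t : R) (i : axis) :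
  in_I a b t -> i <> az ->
  pdX Lh (xh (xi t)) (vel xh (xi t)) (xi t) i
  = c / (c - vc (vel x t) az) * pdX L (x t) (vel x t) t i.
Proof.
  intros Ht Hi. unfold Lh. rewrite pdX_Lhat_perp by exact Hi.
  rewrite lab_velocity, lab_time, xh_xi, hat_time_factor by exact Ht. reflexivity.
Qed.

Lemma hat_pdX_z (t : R) :
  in_I a b t ->
  pdX Lh (xh (xi t)) (vel xh (xi t)) (xi t) az
  = c / (c - vc (vel x t) az) * (pdX L (x t) (vel x t) t az + pdT L (x t) (vel x t) t / c).
Proof.
  intros Ht. unfold Lh, L. rewrite pdX_Lhat_z by assumption.
  rewrite lab_velocity, lab_time, xh_xi, hat_time_factor by exact Ht. reflexivity.
Qed.

Lemma hat_force (t : R) :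
  in_I a b t ->
  let F := Q (x t) (vel x t) t in
  let D := c - vc (vel x t) az in
  Qhat c Q (xh (xi t)) (vel xh (xi t)) (xi t)
  = mk3 (c / D * vc F ax) (c / D * vc F ay)
        (vc F az - (vc (vel x t) ax / D * vc F ax + vc (vel x t) ay / D * vc F ay)).
Proof.
  intros Ht F D. unfold Qhat.
  rewrite lab_velocity, lab_time, xh_xi, hat_time_factor, !vel_xh by exact Ht. reflexivity.
Qed.

Lemma EL_residual_hat_perp (t : R) (i : axis) :
  in_I a b t -> i <> az ->
  EL_residual Lh (Qhat c Q) xh (xi t) i
  = c / (c - vc (vel x t) az) * EL_residual L Q x t i.
Proof.
  intros Ht Hi. pose proof (z_speed_lt c _ Hc (Hv t Ht)).
  assert (HP : is_derive (fun s => c * P i s) t (c * Derive (P i) t))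
    by (apply is_derive_scal, Derive_correct, ex_derive_momentum, Ht).
  unfold EL_residual.
  rewrite (is_derive_unique _ _ _ (is_derive_through_xi _ _ t _ Ht
             (fun s Hs => hat_momentum_perp s i Hs Hi) HP)).
  rewrite Derive_lab_momentum, hat_pdX_perp, hat_force by assumption.
  destruct i; [| |contradiction]; cbn [vc mk3 fst snd] in *; field; lra.
Qed.

Lemma EL_residual_hat_z (t : R) :
  in_I a b t ->
  EL_residual Lh (Qhat c Q) xh (xi t) az
  = EL_residual L Q x t az
    - vc (vel x t) ax / (c - vc (vel x t) az) * EL_residual L Q x t ax
    - vc (vel x t) ay / (c - vc (vel x t) az) * EL_residual L Q x t ay.
Proof.
  intros Ht. pose proof (z_speed_lt c _ Hc (Hv t Ht)).
  assert (HG := is_derive_Rminus (fun s => c * P az s) E t _ _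
                  (is_derive_scal _ _ c _ (Derive_correct _ _ (ex_derive_momentum az t Ht)))
                  (energy_balance t Ht)).
  unfold EL_residual.
  rewrite (is_derive_unique _ _ _ (is_derive_through_xi _ _ t _ Ht
             (fun s Hs => hat_momentum_z s Hs) HG)).
  rewrite !Derive_lab_momentum, hat_pdX_z, hat_force by assumption.
  unfold sum3. cbn [vc mk3 fst snd] in *. field. lra.
Qed.

Lemma EL_iff_EL_hat (t : R) :
  in_I a b t -> EL L Q x t <-> EL Lh (Qhat c Q) xh (xi t).
Proof.
  intros Ht. pose proof (z_speed_lt c _ Hc (Hv t Ht)).
  rewrite !EL_iff_residual.
  apply (unitriangular_zero_iff (c / (c - vc (vel x t) az))
           (vc (vel x t) ax / (c - vc (vel x t) az)) (vc (vel x t) ay / (c - vc (vel x t) az))).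
  - apply Rgt_not_eq, Rdiv_lt_0_compat; lra.
  - apply EL_residual_hat_perp; [exact Ht|discriminate].
  - apply EL_residual_hat_perp; [exact Ht|discriminate].
  - apply EL_residual_hat_z, Ht.
Qed.

End Reparametrization.

Theorem proposition10
  (m c q : R) (A0 : R -> V3 -> R) (A : R -> V3 -> V3) (Q : Force)
  (a b : Rbar) (x xh : R -> V3) :
  0 < m -> 0 < c ->
  IsC1 A0 -> (forall i, IsC1 (fun t X => vc (A t X) i)) ->
  (forall t, in_I a b t -> forall i,
      ex_derive (fun s => vc (x s) i) t /\
      ex_derive (fun s => vc (vel x s) i) t) ->
  (forall t, in_I a b t -> dot (vel x t) (vel x t) < c ^ 2) ->
  (forall t, in_I a b t -> xh (c * t - vc (x t) az) = x t) ->
  ((forall t, in_I a b t -> EL (Lrel m c q A0 A) Q x t)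
   <->
   (forall t, in_I a b t ->
      EL (Lhat c (Lrel m c q A0 A)) (Qhat c Q) xh (c * t - vc (x t) az))).
Proof.
  intros _ Hc HA0 HA Hx Hv Hxh.
  split; intros H t Ht;
    apply (EL_iff_EL_hat c a b x xh Hc Hx Hv Hxh m q A0 A Q HA0 HA t Ht), H, Ht.
Qed.
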